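(* Let $m_1,m_2,m_3,m_4>0$, $M=m_1+m_2+m_3+m_4$. For $\mathbf{r}=(r_{12},r_{13},r_{14},r_{23},r_{24},r_{34})$ let $U(\mathbf{r})=\sum_{i<j}\frac{m_im_j}{r_{ij}}$, $I(\mathbf{r})=\frac{1}{2M}\sum_{i<j}m_im_jr_{ij}^2$, $P(\mathbf{r})=r_{12}r_{34}+r_{14}r_{23}-r_{13}r_{24}$, and $\mathcal{M}^+=\{\mathbf{r}\in[0,\infty)^6 : I(\mathbf{r})=1,\ P(\mathbf{r})=0\}$. If $\mathbf{r}^\ast\in\mathcal{M}^+$ is a critical point of the restriction $U|_{\mathcal{M}^+}$, then $\mathbf{r}^\ast$ is a nondegenerate local minimum point of $U|_{\mathcal{M}^+}$.
   Context: $U$ is $+\infty$ on the boundary of $\mathcal{M}^+$ (where some $r_{ij}=0$), so critical points lie in the part of $\mathcal{M}^+$ where all $r_{ij}>0$, which is a smooth 4-dimensional manifold. Equivalently, $\mathbf{r}^\ast$ is a critical point iff there exist Lagrange multipliers $\lambda,\sigma\in\mathbb{R}$ with $\nabla_{\mathbf{r}}\big(U+\lambda M(I-1)+\sigma P\big)(\mathbf{r}^\ast)=0$, i.e. $m_1m_2(r_{12}^{-3}-\lambda)=\sigma r_{34}/r_{12}$, $m_3m_4(r_{34}^{-3}-\lambda)=\sigma r_{12}/r_{34}$, $m_1m_3(r_{13}^{-3}-\lambda)=-\sigma r_{24}/r_{13}$, $m_2m_4(r_{24}^{-3}-\lambda)=-\sigma r_{13}/r_{24}$, $m_1m_4(r_{14}^{-3}-\lambda)=\sigma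 r_{23}/r_{14}$, $m_2m_3(r_{23}^{-3}-\lambda)=\sigma r_{14}/r_{23}$. *)

From Stdlib Require Import Reals.
From Coquelicot Require Import Coquelicot.
Open Scope R_scope.

(* A configuration r = (r12, r13, r14, r23, r24, r34) is encoded as a function
   nat -> R, read only at indices 0..5:
   r 0 = r12, r 1 = r13, r 2 = r14, r 3 = r23, r 4 = r24, r 5 = r34. *)
Definition config := nat -> R.

Definition mpair (m1 m2 m3 m4 : R) (k : nat) : R :=
  match k with
  | 0%nat => m1 * m2 | 1%nat => m1 * m3 | 2%nat => m1 * m4
  | 3%nat => m2 * m3 | 4%nat => m2 * m4 | _ => m3 * m4
  end.

Definition Mtot (m1 m2 m3 m4 : R) : R := m1 + m2 + m3 + m4.

Definition sum6 (f : nat -> R) : R := sum_f_R0 f 5.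

Definition Upot (m1 m2 m3 m4 : R) (r : config) : R :=
  sum6 (fun k => mpair m1 m2 m3 m4 k / r k).

Definition Imom (m1 m2 m3 m4 : R) (r : config) : R :=
  / (2 * Mtot m1 m2 m3 m4) * sum6 (fun k => mpair m1 m2 m3 m4 k * (r k) ^ 2).

Definition Pcay (r : config) : R := r 0%nat * r 5%nat + r 2%nat * r 3%nat - r 1%nat * r 4%nat.

Definition Mplus (m1 m2 m3 m4 : R) (r : config) : Prop :=
  (forall k, (k < 6)%nat -> 0 <= r k) /\ Imom m1 m2 m3 m4 r = 1 /\ Pcay r = 0.

Definition upd (r : config) (k : nat) (t : R) : config :=
  fun i => if Nat.eqb i k then t else r i.
Definition pd (f : config -> R) (k : nat) (r : config) : R :=
  Derive (fun t => f (upd r k t)) (r k).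
Definition hess (f : config -> R) (i j : nat) (r : config) : R :=
  pd (fun x => pd f j x) i r.

Definition Lagr (m1 m2 m3 m4 lam sig : R) (r : config) : R :=
  Upot m1 m2 m3 m4 r + lam * Mtot m1 m2 m3 m4 * (Imom m1 m2 m3 m4 r - 1) + sig * Pcay r.

Definition lagrange_mult (m1 m2 m3 m4 : R) (r : config) (lam sig : R) : Prop :=
  forall k, (k < 6)%nat -> pd (Lagr m1 m2 m3 m4 lam sig) k r = 0.

(* critical point of U restricted to M^+ (necessarily in the smooth part where
   all r_ij > 0), characterized by Lagrange multipliers as in the paper *)
Definition critical_point (m1 m2 m3 m4 : R) (r : config) : Prop :=
  Mplus m1 m2 m3 m4 r /\ (forall k, (k < 6)%nat -> 0 < r k) /\
  exists lam sig, lagrange_mult m1 m2 m3 m4 r lam sig.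

Definition local_min_on_Mplus (m1 m2 m3 m4 : R) (rs : config) : Prop :=
  exists eps, 0 < eps /\
    forall r, Mplus m1 m2 m3 m4 r ->
      (forall k, (k < 6)%nat -> Rabs (r k - rs k) < eps) ->
      Upot m1 m2 m3 m4 rs <= Upot m1 m2 m3 m4 r.

Definition tangent (m1 m2 m3 m4 : R) (r v : config) : Prop :=
  sum6 (fun k => pd (Imom m1 m2 m3 m4) k r * v k) = 0 /\
  sum6 (fun k => pd Pcay k r * v k) = 0.

(* Nondegeneracy of the minimum: the Hessian of U|_{M^+} at the critical point,
   i.e. the Hessian of the Lagrangian restricted to the tangent space, is
   positive definite. *)
Definition nondeg_min_hessian (m1 m2 m3 m4 : R) (rs : config) : Prop :=
  forall lam sig, lagrange_mult m1 m2 m3 m4 rs lam sig ->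
  forall v : config, tangent m1 m2 m3 m4 rs v ->
    (exists k, (k < 6)%nat /\ v k <> 0) ->
    0 < sum6 (fun i => sum6 (fun j =>
          v i * v j * hess (Lagr m1 m2 m3 m4 lam sig) i j rs)).

From Pilot Require Import Defs.
From Stdlib Require Import Reals Lra Lia.
From Coquelicot Require Import Coquelicot.
Open Scope R_scope.

(* The Lagrangian U + lam M (I - 1) + sig P is, up to the constant lam M, a sum of
   three functions each depending on one pair of opposite distances (r12, r34),
   (r13, r24), (r14, r23).  Euler's identity at a critical point gives
   lam = U / (2M) > 0, and then the two critical equations of a pair force the
   2x2 Hessian block of that pair to have positive determinant: the Hessian of
   the Lagrangian is positive definite on all of R^6, not only on the tangent
   space.  Each pair function also has an exact second-order expansion whose
   coefficients stay close to half its Hessian near the critical point, so it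
   has a local minimum there; since U equals the sum of the pair functions minus
   lam M on M+, U has a local minimum on M+. *)

Lemma quad_form_nonneg A B c x y :
  0 < A -> c * c <= A * B -> 0 <= A * x ^ 2 + B * y ^ 2 + 2 * c * x * y.
Proof.
intros HA Hc.
assert (E : A * (A * x ^ 2 + B * y ^ 2 + 2 * c * x * y)
            = (A * x + c * y) ^ 2 + (A * B - c * c) * y ^ 2) by ring.
assert (0 <= (A * x + c * y) ^ 2 + (A * B - c * c) * y ^ 2).
{ apply Rplus_le_le_0_compat; [apply pow2_ge_0 | apply Rmult_le_pos; [lra | apply pow2_ge_0]]. }
nra.
Qed.

Lemma quad_form_pos A B c x y :
  0 < A -> c * c < A * B -> x <> 0 \/ y <> 0 ->
  0 < A * x ^ 2 + B * y ^ 2 + 2 * c * x * y.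
Proof.
intros HA Hc Hxy.
assert (E : A * (A * x ^ 2 + B * y ^ 2 + 2 * c * x * y)
            = (A * x + c * y) ^ 2 + (A * B - c * c) * y ^ 2) by ring.
assert (0 <= (A * x + c * y) ^ 2) by apply pow2_ge_0.
destruct (Req_dec y 0) as [-> | Hy].
- destruct Hxy as [Hx | Hx]; [| lra].
  assert (0 < x ^ 2) by (apply pow2_gt_0; exact Hx). nra.
- assert (0 < y ^ 2) by (apply pow2_gt_0; exact Hy). nra.
Qed.

Lemma exists_scale_sq_le c X :
  c * c < X -> exists d, 0 < d <= 1 /\ (1 + d) ^ 2 * (c * c) <= X.
Proof.
intros HX.
set (k := 3 * (c * c) + 1).
assert (Hk : 0 < k) by (unfold k; nra).
exists (Rmin 1 ((X - c * c) / k)); set (d := Rmin 1 _).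
assert (d1 : d <= 1) by apply Rmin_l.
assert (dX : d * k <= X - c * c).
{ assert (Hd : d <= (X - c * c) / k) by apply Rmin_r.
  apply (Rmult_le_compat_r k) in Hd; [| lra].
  unfold Rdiv in Hd. rewrite Rmult_assoc, Rinv_l, Rmult_1_r in Hd; lra. }
assert (d0 : 0 < d) by (apply Rmin_pos; [lra | apply Rdiv_lt_0_compat; lra]).
split; [lra |].
unfold k in dX. nra.
Qed.

Lemma uniform_radius (P : nat -> R -> Prop) n :
  (forall k e e', 0 < e' <= e -> P k e -> P k e') ->
  (forall k, (k < n)%nat -> exists e, 0 < e /\ P k e) ->
  exists e, 0 < e /\ forall k, (k < n)%nat -> P k e.
Proof.
intros Hmono. induction n as [| n IH]; intros Hex.
- exists 1. split; [lra | intros k Hk; lia].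
- destruct IH as [e1 [He1 H1]]; [intros k Hk; apply Hex; lia |].
  destruct (Hex n ltac:(lia)) as [e2 [He2 H2]].
  exists (Rmin e1 e2). split; [now apply Rmin_pos |].
  intros k Hk. destruct (Nat.eq_dec k n) as [-> | Hkn].
  + apply (Hmono n e2); [split; [now apply Rmin_pos | apply Rmin_r] | exact H2].
  + apply (Hmono k e1); [split; [now apply Rmin_pos | apply Rmin_l] | apply H1; lia].
Qed.

Lemma near_ratio_bound x s d :
  0 < s -> 0 < d <= 1 -> Rabs (x - s) < d * s -> 0 < x <= (1 + d) * s.
Proof. intros Hs Hd Hx. apply Rabs_def2 in Hx. nra. Qed.

Definition pair_lagr (m m' lam t x y : R) : R :=
  m / x + m' / y + lam / 2 * (m * x ^ 2 + m' * y ^ 2) + t * x * y.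

Definition hess_coef (m lam s : R) : R := 2 * m / s ^ 3 + lam * m.

Lemma hess_coef_pos m lam s : 0 < m -> 0 < lam -> 0 < s -> 0 < hess_coef m lam s.
Proof.
intros Hm Hlam Hs. unfold hess_coef.
assert (0 < 2 * m / s ^ 3) by (apply Rdiv_lt_0_compat; [lra | now apply pow_lt]). nra.
Qed.

Lemma hess_coef_le_expansion_coef m lam s x d :
  0 < m -> 0 < lam -> 0 < s -> 0 <= d -> 0 < x <= (1 + d) * s ->
  hess_coef m lam s <= 2 * (1 + d) * (m / (s ^ 2 * x) + lam * m / 2).
Proof.
intros Hm Hlam Hs Hd [Hx Hxs].
assert (H : m / s ^ 3 <= (1 + d) * (m / (s ^ 2 * x))).
{ replace ((1 + d) * (m / (s ^ 2 * x))) with (m / s ^ 3 * ((1 + d) * s / x))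
    by (field; lra).
  rewrite <- (Rmult_1_r (m / s ^ 3)) at 1.
  apply Rmult_le_compat_l; [apply Rlt_le, Rdiv_lt_0_compat; [lra | now apply pow_lt] |].
  apply (Rmult_le_reg_r x); [lra |]. unfold Rdiv. rewrite Rmult_assoc, Rinv_l; lra. }
replace (hess_coef m lam s) with (2 * (m / s ^ 3) + lam * m)
  by (unfold hess_coef, Rdiv; ring).
assert (0 <= d * (lam * m)) by (apply Rmult_le_pos; nra).
lra.
Qed.

Section OppositePair.

Variables m m' lam t s s' : R.
Hypotheses (Hm : 0 < m) (Hm' : 0 < m') (Hlam : 0 < lam) (Hs : 0 < s) (Hs' : 0 < s').
Hypothesis crit_x : - m / s ^ 2 + lam * m * s + t * s' = 0.
Hypothesis crit_y : - m' / s' ^ 2 + lam * m' * s' + t * s = 0.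

(* With a = m/s^3 and b = m'/s'^3, the critical equations give
   t^2 = (a - lam m)(b - lam m'), whence
   hess_coef m * hess_coef m' - t^2 = 3 (a b + a lam m' + b lam m). *)
Lemma pair_hess_det_pos : t * t < hess_coef m lam s * hess_coef m' lam s'.
Proof.
set (a := m / s ^ 3). set (b := m' / s' ^ 3).
assert (Ha : 0 < a) by (apply Rdiv_lt_0_compat; [lra | now apply pow_lt]).
assert (Hb : 0 < b) by (apply Rdiv_lt_0_compat; [lra | now apply pow_lt]).
assert (Ea : a - lam * m = t * s' / s).
{ unfold a. apply (Rmult_eq_reg_r s); [| lra].
  replace ((m / s ^ 3 - lam * m) * s) with (m / s ^ 2 - lam * m * s) by (field; lra).
  replace (t * s' / s * s) with (t * s') by (field; lra). lra. }
assert (Eb : b - lam * m' = t * s / s').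
{ unfold b. apply (Rmult_eq_reg_r s'); [| lra].
  replace ((m' / s' ^ 3 - lam * m') * s') with (m' / s' ^ 2 - lam * m' * s') by (field; lra).
  replace (t * s / s' * s') with (t * s) by (field; lra). lra. }
assert (Et : t * t = (a - lam * m) * (b - lam * m')) by (rewrite Ea, Eb; field; lra).
replace (hess_coef m lam s) with (2 * a + lam * m) by (unfold hess_coef, a, Rdiv; ring).
replace (hess_coef m' lam s') with (2 * b + lam * m') by (unfold hess_coef, b, Rdiv; ring).
rewrite Et.
assert (0 < a * (lam * m')) by (apply Rmult_lt_0_compat; nra).
assert (0 < b * (lam * m)) by (apply Rmult_lt_0_compat; nra).
assert (0 < a * b) by nra.
nra.
Qed.

(* The first-order terms are the critical equations. *)
Lemma pair_lagr_expansion x y : x <> 0 -> y <> 0 ->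
  pair_lagr m m' lam t x y - pair_lagr m m' lam t s s'
  = (m / (s ^ 2 * x) + lam * m / 2) * (x - s) ^ 2
    + (m' / (s' ^ 2 * y) + lam * m' / 2) * (y - s') ^ 2 + t * (x - s) * (y - s').
Proof.
intros Hx Hy.
assert (E : pair_lagr m m' lam t x y - pair_lagr m m' lam t s s'
  - ((m / (s ^ 2 * x) + lam * m / 2) * (x - s) ^ 2
     + (m' / (s' ^ 2 * y) + lam * m' / 2) * (y - s') ^ 2 + t * (x - s) * (y - s'))
  = (- m / s ^ 2 + lam * m * s + t * s') * (x - s)
    + (- m' / s' ^ 2 + lam * m' * s' + t * s) * (y - s')).
{ unfold pair_lagr. field. repeat split; lra. }
rewrite crit_x, crit_y in E. lra.
Qed.

Lemma pair_lagr_local_min :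
  exists eps, 0 < eps /\ forall x y, Rabs (x - s) < eps -> Rabs (y - s') < eps ->
    pair_lagr m m' lam t s s' <= pair_lagr m m' lam t x y.
Proof.
destruct (exists_scale_sq_le t _ pair_hess_det_pos) as [d [Hd Hdet]].
exists (d * Rmin s s'). split; [apply Rmult_lt_0_compat; [lra | now apply Rmin_pos] |].
intros x y Hx Hy.
assert (Hmin : d * Rmin s s' <= d * s /\ d * Rmin s s' <= d * s').
{ split; apply Rmult_le_compat_l; [lra | apply Rmin_l | lra | apply Rmin_r]. }
destruct (near_ratio_bound x s d Hs Hd ltac:(lra)) as [Hx0 Hxs].
destruct (near_ratio_bound y s' d Hs' Hd ltac:(lra)) as [Hy0 Hys].
set (al := m / (s ^ 2 * x) + lam * m / 2).
set (be := m' / (s' ^ 2 * y) + lam * m' / 2).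
assert (HA := hess_coef_le_expansion_coef m lam s x d Hm Hlam Hs ltac:(lra) (conj Hx0 Hxs)).
assert (HB := hess_coef_le_expansion_coef m' lam s' y d Hm' Hlam Hs' ltac:(lra) (conj Hy0 Hys)).
fold al in HA. fold be in HB.
pose proof (hess_coef_pos m lam s Hm Hlam Hs).
pose proof (hess_coef_pos m' lam s' Hm' Hlam Hs').
assert (Hal : 0 < al) by nra.
assert (Hcoef : t / 2 * (t / 2) <= al * be).
{ assert (hess_coef m lam s * hess_coef m' lam s'
          <= (2 * (1 + d) * al) * (2 * (1 + d) * be)) by (apply Rmult_le_compat; lra).
  assert (0 < (1 + d) ^ 2) by (apply pow_lt; lra).
  nra. }
assert (Q := quad_form_nonneg al be (t / 2) (x - s) (y - s') Hal Hcoef).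
assert (E := pair_lagr_expansion x y ltac:(lra) ltac:(lra)).
fold al be in E. lra.
Qed.

End OppositePair.

(* Edges k and 5 - k are opposite (r12/r34, r13/r24, r14/r23), and
   cayley_sign k is the sign of their product in P. *)
Definition opposite_edge (k : nat) : nat := (5 - k)%nat.

Definition cayley_sign (k : nat) : R :=
  match k with 1%nat | 4%nat => -1 | _ => 1 end.

Definition lagr_grad (m1 m2 m3 m4 lam sig : R) (x : config) (k : nat) : R :=
  - mpair m1 m2 m3 m4 k / x k ^ 2 + lam * mpair m1 m2 m3 m4 k * x k
  + sig * cayley_sign k * x (opposite_edge k).

Definition lagr_hess (m1 m2 m3 m4 lam sig : R) (x : config) (i j : nat) : R :=
  (if Nat.eqb i j then hess_coef (mpair m1 m2 m3 m4 i) lam (x i) else 0)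
  + (if Nat.eqb j (opposite_edge i) then sig * cayley_sign i else 0).

Definition pair_sum (m1 m2 m3 m4 lam sig : R) (x : config) : R :=
  sum_f_R0 (fun k => pair_lagr (mpair m1 m2 m3 m4 k) (mpair m1 m2 m3 m4 (opposite_edge k))
                       lam (sig * cayley_sign k) (x k) (x (opposite_edge k))) 2.

Section Lagrangian.

Variables m1 m2 m3 m4 lam sig : R.
Hypothesis HMtot : Mtot m1 m2 m3 m4 <> 0.

Lemma pd_Lagr x k : (k < 6)%nat -> x k <> 0 ->
  pd (Lagr m1 m2 m3 m4 lam sig) k x = lagr_grad m1 m2 m3 m4 lam sig x k.
Proof.
intros Hk Hx.
destruct k as [|[|[|[|[|[|k]]]]]]; try lia;
unfold pd, Lagr, Upot, Imom, Pcay, sum6, upd, lagr_grad, opposite_edge, cayley_sign,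
  mpair, Mtot in *; simpl in *;
apply is_derive_unique; auto_derive; try (repeat split; auto; fail); field; auto.
Qed.

Lemma hess_Lagr x i j : (i < 6)%nat -> (j < 6)%nat -> (forall k, (k < 6)%nat -> x k <> 0) ->
  hess (Lagr m1 m2 m3 m4 lam sig) i j x = lagr_hess m1 m2 m3 m4 lam sig x i j.
Proof.
intros Hi Hj Hx.
unfold hess.
change (Derive (fun t => pd (Lagr m1 m2 m3 m4 lam sig) j (upd x i t)) (x i)
        = lagr_hess m1 m2 m3 m4 lam sig x i j).
rewrite (Derive_ext_loc _ (fun t => lagr_grad m1 m2 m3 m4 lam sig (upd x i t) j)).
2:{ assert (Hp : 0 < Rabs (x i)) by (apply Rabs_pos_lt; auto).
  exists (mkposreal _ Hp). intros y Hy. apply pd_Lagr; auto.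
  unfold upd. destruct (Nat.eqb j i) eqn:E.
  - apply Nat.eqb_eq in E; subst j. intros ->.
    change (Rabs (0 - x i) < Rabs (x i)) in Hy.
    rewrite Rminus_0_l, Rabs_Ropp in Hy; lra.
  - auto. }
assert (Hi0 := Hx i Hi).
destruct i as [|[|[|[|[|[|i]]]]]]; try lia;
destruct j as [|[|[|[|[|[|j]]]]]]; try lia;
unfold lagr_grad, lagr_hess, hess_coef, opposite_edge, cayley_sign, upd, mpair; simpl;
apply is_derive_unique; auto_derive; try (repeat split; auto; fail); field; auto.
Qed.

Lemma Mtot_Imom x :
  Mtot m1 m2 m3 m4 * Imom m1 m2 m3 m4 x = / 2 * sum6 (fun k => mpair m1 m2 m3 m4 k * x k ^ 2).
Proof. unfold Imom. field. exact HMtot. Qed.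

Lemma pair_sum_Lagr x :
  pair_sum m1 m2 m3 m4 lam sig x = Lagr m1 m2 m3 m4 lam sig x + lam * Mtot m1 m2 m3 m4.
Proof.
transitivity (Upot m1 m2 m3 m4 x + lam * (Mtot m1 m2 m3 m4 * Imom m1 m2 m3 m4 x)
              + sig * Pcay x).
- rewrite Mtot_Imom.
  unfold pair_sum, pair_lagr, Upot, Pcay, sum6, opposite_edge, cayley_sign; simpl.
  unfold Rdiv. ring.
- unfold Lagr. ring.
Qed.

Lemma Upot_on_Mplus r : Defs.Mplus m1 m2 m3 m4 r ->
  Upot m1 m2 m3 m4 r = pair_sum m1 m2 m3 m4 lam sig r - lam * Mtot m1 m2 m3 m4.
Proof.
intros [_ [HI HP]]. rewrite pair_sum_Lagr. unfold Lagr. rewrite HI, HP. ring.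
Qed.

Lemma lagr_grad_euler x : (forall k, (k < 6)%nat -> x k <> 0) ->
  sum6 (fun k => x k * lagr_grad m1 m2 m3 m4 lam sig x k)
  = - Upot m1 m2 m3 m4 x + 2 * lam * (Mtot m1 m2 m3 m4 * Imom m1 m2 m3 m4 x)
    + 2 * sig * Pcay x.
Proof.
intros Hx. rewrite Mtot_Imom.
unfold lagr_grad, Upot, Pcay, sum6, opposite_edge, cayley_sign; simpl.
field. repeat split; auto; apply Hx; lia.
Qed.

Lemma lagr_hess_form_pairs x v :
  sum6 (fun i => sum6 (fun j => v i * v j * lagr_hess m1 m2 m3 m4 lam sig x i j))
  = sum_f_R0 (fun k =>
      hess_coef (mpair m1 m2 m3 m4 k) lam (x k) * v k ^ 2
      + hess_coef (mpair m1 m2 m3 m4 (opposite_edge k)) lam (x (opposite_edge k))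
        * v (opposite_edge k) ^ 2
      + 2 * (sig * cayley_sign k) * v k * v (opposite_edge k)) 2.
Proof.
unfold sum6, lagr_hess, opposite_edge, cayley_sign; simpl. ring.
Qed.

End Lagrangian.

Lemma sum_f_R0_pos (f : nat -> R) n :
  (forall k, (k <= n)%nat -> 0 <= f k) -> (exists k, (k <= n)%nat /\ 0 < f k) ->
  0 < sum_f_R0 f n.
Proof.
induction n as [| n IH]; intros Hnn [k [Hk Hk0]]; simpl.
- replace k with 0%nat in Hk0 by lia. exact Hk0.
- specialize (Hnn (S n) (le_n _)) as Hlast.
  destruct (Nat.eq_dec k (S n)) as [-> | Hkn].
  + assert (0 <= sum_f_R0 f n).
    { rewrite <- (sum_eq_R0 (fun _ => 0) n) by reflexivity.
      apply sum_Rle. intros j Hj. apply Hnn. lia. }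
    lra.
  + assert (0 < sum_f_R0 f n).
    { apply IH; [intros j Hj; apply Hnn; lia | exists k; split; [lia | exact Hk0]]. }
    lra.
Qed.

Lemma opposite_edge_involutive k : (k < 6)%nat -> opposite_edge (opposite_edge k) = k.
Proof. unfold opposite_edge. lia. Qed.

Lemma cayley_sign_opposite k : (k < 6)%nat -> cayley_sign (opposite_edge k) = cayley_sign k.
Proof. intros Hk. destruct k as [|[|[|[|[|[|k]]]]]]; reflexivity || lia. Qed.

Lemma mpair_pos m1 m2 m3 m4 k :
  0 < m1 -> 0 < m2 -> 0 < m3 -> 0 < m4 -> 0 < mpair m1 m2 m3 m4 k.
Proof.
intros. destruct k as [|[|[|[|[|k]]]]]; simpl; apply Rmult_lt_0_compat; assumption.
Qed.

Lemma Upot_pos m1 m2 m3 m4 x :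
  0 < m1 -> 0 < m2 -> 0 < m3 -> 0 < m4 -> (forall k, (k < 6)%nat -> 0 < x k) ->
  0 < Upot m1 m2 m3 m4 x.
Proof.
intros H1 H2 H3 H4 Hx.
unfold Upot, sum6.
apply sum_f_R0_pos.
- intros k Hk. apply Rlt_le, Rdiv_lt_0_compat; [apply mpair_pos | apply Hx; lia]; assumption.
- exists 0%nat. split; [lia |].
  apply Rdiv_lt_0_compat; [apply mpair_pos | apply Hx; lia]; assumption.
Qed.

Section CriticalPoint.

Variables (m1 m2 m3 m4 : R) (rs : config) (lam sig : R).
Hypotheses (Hm1 : 0 < m1) (Hm2 : 0 < m2) (Hm3 : 0 < m3) (Hm4 : 0 < m4).
Hypothesis Hrs_Mplus : Defs.Mplus m1 m2 m3 m4 rs.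
Hypothesis Hrs_pos : forall k, (k < 6)%nat -> 0 < rs k.
Hypothesis Hlag : lagrange_mult m1 m2 m3 m4 rs lam sig.

Let Mtot_pos : 0 < Mtot m1 m2 m3 m4.
Proof. unfold Mtot. lra. Qed.

Let Mtot_neq0 : Mtot m1 m2 m3 m4 <> 0.
Proof. apply Rgt_not_eq, Mtot_pos. Qed.

Let rs_neq0 k : (k < 6)%nat -> rs k <> 0.
Proof. intros Hk. apply Rgt_not_eq, Hrs_pos, Hk. Qed.

Lemma lagr_grad_eq0 k : (k < 6)%nat -> lagr_grad m1 m2 m3 m4 lam sig rs k = 0.
Proof. intros Hk. rewrite <- pd_Lagr by auto. exact (Hlag k Hk). Qed.

Lemma lagrange_mult_pos : 0 < lam.
Proof.
destruct Hrs_Mplus as [_ [HI HP]].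
assert (E := lagr_grad_euler m1 m2 m3 m4 lam sig Mtot_neq0 rs rs_neq0).
unfold sum6 at 1 in E.
rewrite sum_eq_R0 in E by (intros k Hk; rewrite lagr_grad_eq0 by lia; ring).
rewrite HI, HP in E.
assert (HU := Upot_pos m1 m2 m3 m4 rs Hm1 Hm2 Hm3 Hm4 Hrs_pos).
nra.
Qed.

Lemma critical_pair_eqs k : (k <= 2)%nat ->
  let m := mpair m1 m2 m3 m4 k in
  let m' := mpair m1 m2 m3 m4 (opposite_edge k) in
  let t := sig * cayley_sign k in
  let s := rs k in
  let s' := rs (opposite_edge k) in
  - m / s ^ 2 + lam * m * s + t * s' = 0 /\ - m' / s' ^ 2 + lam * m' * s' + t * s = 0.
Proof.
intros Hk. split.
- exact (lagr_grad_eq0 k ltac:(lia)).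
- assert (Hk6 : (k < 6)%nat) by lia.
  assert (E := lagr_grad_eq0 (opposite_edge k) ltac:(unfold opposite_edge; lia)).
  unfold lagr_grad in E.
  rewrite cayley_sign_opposite, opposite_edge_involutive in E by exact Hk6.
  exact E.
Qed.

Lemma critical_local_min : local_min_on_Mplus m1 m2 m3 m4 rs.
Proof.
pose proof lagrange_mult_pos as Hlam.
set (pair_min k e := forall x y, Rabs (x - rs k) < e -> Rabs (y - rs (opposite_edge k)) < e ->
  pair_lagr (mpair m1 m2 m3 m4 k) (mpair m1 m2 m3 m4 (opposite_edge k)) lam
    (sig * cayley_sign k) (rs k) (rs (opposite_edge k))
  <= pair_lagr (mpair m1 m2 m3 m4 k) (mpair m1 m2 m3 m4 (opposite_edge k)) lam
    (sig * cayley_sign k) x y).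
destruct (uniform_radius pair_min 3) as [eps [Heps Hmin]].
- intros k e e' He' H x y Hx Hy. apply H; lra.
- intros k Hk. destruct (critical_pair_eqs k ltac:(lia)) as [Ex Ey].
  apply pair_lagr_local_min; auto using mpair_pos; apply Hrs_pos; unfold opposite_edge; lia.
- exists eps. split; [exact Heps |].
  intros r Hr Hclose.
  rewrite (Upot_on_Mplus m1 m2 m3 m4 lam sig Mtot_neq0 rs Hrs_Mplus),
          (Upot_on_Mplus m1 m2 m3 m4 lam sig Mtot_neq0 r Hr).
  apply Rplus_le_compat_r, sum_Rle. intros k Hk.
  apply Hmin; [lia | apply Hclose; lia | apply Hclose; unfold opposite_edge; lia].
Qed.

Lemma critical_hessian_pos (v : config) : (exists k, (k < 6)%nat /\ v k <> 0) ->
  0 < sum6 (fun i => sum6 (fun j => v i * v j * hess (Lagr m1 m2 m3 m4 lam sig) i j rs)).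
Proof.
intros [k [Hk Hvk]].
pose proof lagrange_mult_pos as Hlam.
assert (Hblock : forall j, (j <= 2)%nat ->
  let A := hess_coef (mpair m1 m2 m3 m4 j) lam (rs j) in
  let B := hess_coef (mpair m1 m2 m3 m4 (opposite_edge j)) lam (rs (opposite_edge j)) in
  0 < A /\ (sig * cayley_sign j) * (sig * cayley_sign j) < A * B).
{ intros j Hj. destruct (critical_pair_eqs j Hj) as [Ex Ey].
  assert (Hj' : 0 < rs (opposite_edge j)) by (apply Hrs_pos; unfold opposite_edge; lia).
  split; [apply hess_coef_pos; auto using mpair_pos; apply Hrs_pos; lia |].
  apply pair_hess_det_pos; auto using mpair_pos; apply Hrs_pos; lia. }
assert (Ehess :
  sum6 (fun i => sum6 (fun j => v i * v j * hess (Lagr m1 m2 m3 m4 lam sig) i j rs))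
  = sum6 (fun i => sum6 (fun j => v i * v j * lagr_hess m1 m2 m3 m4 lam sig rs i j))).
{ apply sum_eq. intros i Hi. apply sum_eq. intros j Hj.
  rewrite hess_Lagr by (auto || lia). reflexivity. }
rewrite Ehess, lagr_hess_form_pairs.
apply sum_f_R0_pos.
- intros j Hj. destruct (Hblock j Hj) as [HA Hdet].
  apply quad_form_nonneg; [exact HA | lra].
- destruct (Nat.le_gt_cases k 2) as [Hk2 | Hk2];
    [exists k | exists (opposite_edge k)]; (split; [unfold opposite_edge; lia |]).
  + destruct (Hblock k Hk2) as [HA Hdet]. apply quad_form_pos; auto.
  + assert (Hj : (opposite_edge k <= 2)%nat) by (unfold opposite_edge; lia).
    destruct (Hblock _ Hj) as [HA Hdet]. apply quad_form_pos; auto.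
    right. rewrite opposite_edge_involutive; assumption.
Qed.

End CriticalPoint.

Theorem proposition3 (m1 m2 m3 m4 : R) (rs : config) :
  0 < m1 -> 0 < m2 -> 0 < m3 -> 0 < m4 ->
  critical_point m1 m2 m3 m4 rs ->
  local_min_on_Mplus m1 m2 m3 m4 rs /\ nondeg_min_hessian m1 m2 m3 m4 rs.
Proof.
intros Hm1 Hm2 Hm3 Hm4 [HMplus [Hpos [lam [sig Hlag]]]].
split.
- exact (critical_local_min m1 m2 m3 m4 rs lam sig Hm1 Hm2 Hm3 Hm4 HMplus Hpos Hlag).
- intros lam' sig' Hlag' v _ Hv.
  exact (critical_hessian_pos m1 m2 m3 m4 rs lam' sig' Hm1 Hm2 Hm3 Hm4 HMplus Hpos Hlag' v Hv).
Qed.
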